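(* Let $G$ be a connected graph on $n$ vertices with distance squared matrix $\Delta$. Let $v$ be a vertex of degree $2$ whose removal disconnects $G$, and let $u,w$ be the two neighbors of $v$. Define $\mathbf x\in\mathbb R^n$ by $x_u=x_w=1$, $x_v=-2$, and $x_i=0$ for all other vertices $i$. Then $\Delta\mathbf x=2\cdot\mathbf 1$, where $\mathbf 1$ is the all-ones vector.
   Context: For a connected graph $G$ with vertices $1,\dots,n$, the distance squared matrix $\Delta$ is the $n\times n$ matrix with $(i,j)$ entry $d_{ij}^2$, where $d_{ij}$ is the graph distance between $i$ and $j$ (with $d_{ii}=0$). *)

From mathcomp Require Import all_boot all_order all_algebra.
Set Implicit Arguments. Unset Strict Implicit. Unset Printing Implicit Defensive.
Import Order.TTheory GRing.Theory Num.Theory.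

Definition simple_graph (n : nat) (e : rel 'I_n) : Prop :=
  symmetric e /\ irreflexive e.

Definition connected_graph (n : nat) (e : rel 'I_n) : Prop :=
  forall i j, connect e i j.

Fixpoint within (n : nat) (e : rel 'I_n) (k : nat) (i j : 'I_n) : bool :=
  match k with
  | 0 => i == j
  | k'.+1 => within e k' i j || [exists l, e i l && within e k' l j]
  end.

(* Graph distance: least k (< n) such that j is reachable from i in at most
   k steps; for connected graphs this is the usual shortest-path distance
   (which is always < n). *)
Definition gdist (n : nat) (e : rel 'I_n) (i j : 'I_n) : nat :=
  find (fun k => within e k i j) (iota 0 n).

Definition dist_sq_mx (R : nzRingType) (n : nat) (e : rel 'I_n) : 'M[R]_n :=
  \matrix_(i, j) (((gdist e i j) ^ 2)%N%:R)%R.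

(* Graph obtained by deleting vertex v (v kept as an isolated vertex that we
   ignore): edges not incident to v. *)
Definition del_vertex (n : nat) (e : rel 'I_n) (v : 'I_n) : rel 'I_n :=
  fun x y => [&& e x y, x != v & y != v].

Definition cut_vertex (n : nat) (e : rel 'I_n) (v : 'I_n) : Prop :=
  exists a b : 'I_n, [/\ a != v, b != v & ~~ connect (del_vertex e v) a b].

Definition degree (n : nat) (e : rel 'I_n) (v : 'I_n) : nat := #|[set j | e v j]|.

(* Every vertex j other than v lies, in G - v, on the side of exactly one of
   the two neighbours, say u.  A shortest path from v to j then starts with
   the edge vu, while every walk from w to j passes through v; hence
   d(u,j) = t - 1 and d(w,j) = t + 1 with t = d(v,j), and
   (t - 1)^2 + (t + 1)^2 - 2 t^2 = 2.  For j = v the same sum is 1 + 1 - 0. *)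

From mathcomp Require Import all_boot all_order all_algebra.
From mathcomp Require Import zify.
Import GRing.Theory Num.Theory.

Set Implicit Arguments. Unset Strict Implicit. Unset Printing Implicit Defensive.

Section Walks.
Variables (n : nat) (e : rel 'I_n).

Lemma withinS k i j : within e k i j -> within e k.+1 i j.
Proof. by move=> wij /=; rewrite wij. Qed.

Lemma within_edge k i l j : e i l -> within e k l j -> within e k.+1 i j.
Proof. by move=> eil wlj /=; apply/orP; right; apply/existsP; exists l; rewrite eil. Qed.

Lemma within_rcons k i l j : within e k i l -> e l j -> within e k.+1 i j.
Proof.
elim: k i => [|k IHk] i.
  by move=> /eqP -> elj; apply: within_edge elj _; rewrite /= eqxx.
case/orP=> [wil|/existsP [m /andP [eim wml]]] elj.
  exact/withinS/(IHk _ wil elj).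
exact: within_edge eim (IHk _ wml elj).
Qed.

Lemma within_sym k i j : symmetric e -> within e k i j -> within e k j i.
Proof.
move=> sym_e; elim: k i j => [|k IHk] i j /=; first by rewrite eq_sym.
case/orP=> [wij|/existsP [l /andP [eil wlj]]]; first by rewrite IHk.
by apply: within_rcons (IHk _ _ wlj) _; rewrite sym_e.
Qed.

Lemma within_path i p : path e i p -> within e (size p) i (last i p).
Proof.
elim: p i => [|l p IHp] i /=; first by rewrite eqxx.
by case/andP=> eil /IHp; apply: within_edge.
Qed.

Lemma connect_within i j : connect e i j -> exists2 k, (k < n)%N & within e k i j.
Proof.
case/connectP=> p e_p ->; have [q e_q uniq_q _] := shortenP e_p.
exists (size q); last exact: within_path.
by have := max_card (mem (i :: q)); rewrite card_ord (card_uniqP uniq_q).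
Qed.

Lemma within_step k i j : i != j -> within e k i j ->
  exists k' l, [/\ k = k'.+1, e i l & within e k' l j].
Proof.
move=> neq_ij; elim: k => [|k IHk] /=; first by rewrite (negbTE neq_ij).
case/orP=> [/IHk [k' [l [-> eil wlj]]]|/existsP [l /andP [eil wlj]]].
  by exists k'.+1, l; split; rewrite ?withinS.
by exists k, l.
Qed.

Lemma gdist_min k i j : within e k i j -> (gdist e i j <= k)%N.
Proof.
move=> wij; have [lt_kn|le_nk] := ltnP k n.
  by rewrite leqNgt; apply/negP => /(before_find 0); rewrite nth_iota // add0n wij.
apply: leq_trans le_nk.
by have := find_size (fun k => within e k i j) (iota 0 n); rewrite size_iota.
Qed.

Hypothesis conn_e : connected_graph e.

Lemma gdist_within i j : within e (gdist e i j) i j.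
Proof.
have [k lt_kn wij] := connect_within (conn_e i j).
have has_ij : has (fun k => within e k i j) (iota 0 n).
  by apply/hasP; exists k; rewrite ?mem_iota.
have lt_dn : (gdist e i j < n)%N.
  by rewrite -[X in (_ < X)%N](size_iota 0 n) -has_find.
by have := nth_find 0 has_ij; rewrite nth_iota // add0n.
Qed.

Lemma gdist_eq0 i j : (gdist e i j == 0%N) = (i == j).
Proof.
apply/idP/eqP => [/eqP d0|->]; first by have := gdist_within i j; rewrite d0 => /eqP.
by rewrite -leqn0 gdist_min //= eqxx.
Qed.

Lemma gdist_sym i j : symmetric e -> gdist e i j = gdist e j i.
Proof.
by move=> sym_e; apply/eqP; rewrite eqn_leq !gdist_min // within_sym // gdist_within.
Qed.

Lemma gdist_edge_le i l j : e i l -> (gdist e i j <= (gdist e l j).+1)%N.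
Proof. by move=> eil; apply/gdist_min/(within_edge eil)/gdist_within. Qed.

Lemma gdist_first_step i j : i != j ->
  exists2 l, e i l & gdist e i j = (gdist e l j).+1.
Proof.
move=> neq_ij; have [k [l [dk eil wlj]]] := within_step neq_ij (gdist_within i j).
exists l => //; apply/eqP; rewrite eqn_leq gdist_edge_le //.
by rewrite dk ltnS gdist_min.
Qed.

Lemma gdist_edge i l : e i l -> i != l -> gdist e i l = 1%N.
Proof.
move=> eil neq_il; have d_ll : gdist e l l = 0%N by apply/eqP; rewrite gdist_eq0.
by apply/eqP; rewrite eqn_leq lt0n gdist_eq0 neq_il andbT -d_ll gdist_edge_le.
Qed.

End Walks.

Lemma degree2_nbrs n (e : rel 'I_n) (v u w : 'I_n) :
  degree e v = 2%N -> e v u -> e v w -> u != w ->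
  forall l, e v l -> l = u \/ l = w.
Proof.
move=> deg_v evu evw neq_uw l evl.
have nbrs_v : [set u; w] = [set j | e v j].
  apply/eqP; rewrite eqEcard cards2 neq_uw -/(degree e v) deg_v andbT.
  by apply/subsetP=> j /set2P [] ->; rewrite inE.
by apply/set2P; rewrite nbrs_v inE.
Qed.

Section CutVertex.
Variables (n : nat) (e : rel 'I_n) (v : 'I_n).
Hypothesis sym_e : symmetric e.
Local Notation D := (del_vertex e v).

Lemma del_vertex_sym : symmetric D.
Proof. by move=> x y; rewrite /del_vertex sym_e [(x != v) && _]andbC. Qed.

Lemma within_cut k a j : a != v -> ~~ connect D a j -> within e k a j ->
  (gdist e v j < k)%N.
Proof.
elim: k a => [|k IHk] a neq_av not_Daj.
  by move=> /eqP eq_aj; rewrite eq_aj connect0 in not_Daj.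
case/orP=> [/IHk|/existsP [l /andP [eal wlj]]]; first by move/(_ neq_av not_Daj)/ltnW.
have [eq_lv|neq_lv] := eqVneq l v; first by rewrite ltnS gdist_min // -eq_lv.
apply/ltnW/(IHk l neq_lv _ wlj); apply: contra not_Daj; apply: connect_trans.
by apply: connect1; rewrite /del_vertex eal neq_av neq_lv.
Qed.

Lemma within_nbr k a u w : (forall l, e v l -> l = u \/ l = w) ->
  a != v -> within e k a v -> connect D a u || connect D a w.
Proof.
move=> nbr_v; elim: k a => [|k IHk] a neq_av; first by rewrite /= (negbTE neq_av).
case/orP=> [/IHk -> //|/existsP [l /andP [eal wlv]]].
have [eq_lv|neq_lv] := eqVneq l v.
  by move: eal; rewrite eq_lv sym_e => /nbr_v [] ->; rewrite connect0 ?orbT.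
have Dal : connect D a l by apply: connect1; rewrite /del_vertex eal neq_av neq_lv.
by case/orP: (IHk l neq_lv wlv) => /(connect_trans Dal) ->; rewrite ?orbT.
Qed.

Hypothesis conn_e : connected_graph e.

Lemma gdist_cut a j : a != v -> ~~ connect D a j -> (gdist e v j < gdist e a j)%N.
Proof. by move=> neq_av not_Daj; apply: within_cut (gdist_within conn_e a j). Qed.

Lemma connect_del_nbr u w : (forall l, e v l -> l = u \/ l = w) ->
  forall a, a != v -> connect D u a || connect D w a.
Proof.
move=> nbr_v a neq_av; rewrite !(sym_connect_sym del_vertex_sym _ a).
exact: within_nbr nbr_v neq_av (gdist_within conn_e a v).
Qed.

Lemma not_connect_del_nbrs u w : (forall l, e v l -> l = u \/ l = w) ->
  cut_vertex e v -> ~~ connect D u w.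
Proof.
move=> nbr_v [a [b [neq_av neq_bv not_Dab]]]; apply: contra not_Dab => Duw.
have Du : forall c, c != v -> connect D u c.
  move=> c /(connect_del_nbr nbr_v) /orP [//|]; exact: connect_trans.
by apply: connect_trans (Du b neq_bv); rewrite (sym_connect_sym del_vertex_sym) Du.
Qed.

Lemma gdist_nbr_side u w j : (forall l, e v l -> l = u \/ l = w) ->
  e v w -> w != v -> j != v -> ~~ connect D u w -> connect D u j ->
  gdist e w j = (gdist e v j).+1 /\ gdist e v j = (gdist e u j).+1.
Proof.
move=> nbr_v evw neq_wv neq_jv not_Duw Duj.
have d_wj : gdist e w j = (gdist e v j).+1.
  apply/eqP; rewrite eqn_leq gdist_cut // ?andbT; last first.
    apply: contra not_Duw => Dwj; apply: connect_trans Duj _.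
    by rewrite (sym_connect_sym del_vertex_sym).
  by apply: (gdist_edge_le conn_e); rewrite sym_e.
have neq_vj : v != j by rewrite eq_sym.
have [l /nbr_v [] -> d_vj] := gdist_first_step conn_e neq_vj; first by [].
by move: d_vj; rewrite d_wj; lia.
Qed.

Lemma gdist_nbrs_sqr_sum u w : (forall l, e v l -> l = u \/ l = w) ->
  e v u -> e v w -> u != v -> w != v -> ~~ connect D u w ->
  forall j, (gdist e u j ^ 2 + gdist e w j ^ 2 = 2 * gdist e v j ^ 2 + 2)%N.
Proof.
move=> nbr_v evu evw neq_uv neq_wv not_Duw j.
have [->|neq_jv] := eqVneq j v.
  have d_vv : gdist e v v = 0%N by apply/eqP; rewrite gdist_eq0.
  have d_uv : gdist e u v = 1%N by apply: gdist_edge; rewrite // sym_e.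
  have d_wv : gdist e w v = 1%N by apply: gdist_edge; rewrite // sym_e.
  by rewrite d_vv d_uv d_wv.
have nbr_v' l : e v l -> l = w \/ l = u by case/nbr_v; [right|left].
have not_Dwu : ~~ connect D w u by rewrite (sym_connect_sym del_vertex_sym).
case/orP: (connect_del_nbr nbr_v neq_jv) => [Duj|Dwj].
  by have [-> ->] := gdist_nbr_side nbr_v evw neq_wv neq_jv not_Duw Duj; nia.
by have [-> ->] := gdist_nbr_side nbr_v' evu neq_uv neq_jv not_Dwu Dwj; nia.
Qed.

End CutVertex.

Local Open Scope ring_scope.

Lemma col_delta_combination (R : pzRingType) n (u v w : 'I_n) :
  u != v -> w != v -> u != w ->
  \col_i (if (i == u) || (i == w) then 1 else if i == v then -2 else 0) =
    delta_mx u 0 + delta_mx w 0 - 2 *: delta_mx v 0 :> 'cV[R]_n.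
Proof.
move=> neq_uv neq_wv neq_uw; apply/matrixP=> i j; rewrite !mxE (ord1 j) !eqxx !andbT.
have [eq_iu|neq_iu] := eqVneq i u.
  by rewrite eq_iu (negbTE neq_uw) (negbTE neq_uv) addr0 mulr0 subr0.
have [eq_iw|neq_iw] := eqVneq i w.
  by rewrite eq_iw (negbTE neq_wv) add0r mulr0 subr0.
have [eq_iv|neq_iv] := eqVneq i v; first by rewrite /= !add0r mulr1.
by rewrite /= add0r mulr0 subr0.
Qed.

Theorem lemma3p3 (R : realFieldType) (n : nat) (e : rel 'I_n) (u v w : 'I_n) :
  simple_graph e -> connected_graph e ->
  degree e v = 2%N -> cut_vertex e v ->
  e v u -> e v w -> u != w ->
  let x : 'cV[R]_n :=
    \col_i (if (i == u) || (i == w) then 1 else if i == v then -2 else 0) in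
  dist_sq_mx R e *m x = const_mx 2.
Proof.
move=> [sym_e irr_e] conn_e deg_v cut_v evu evw neq_uw x.
have neq_uv : u != v by apply: contraTneq evu => ->; rewrite irr_e.
have neq_wv : w != v by apply: contraTneq evw => ->; rewrite irr_e.
have nbr_v := degree2_nbrs deg_v evu evw neq_uw.
have not_Duw := not_connect_del_nbrs sym_e conn_e nbr_v cut_v.
rewrite /x col_delta_combination // mulmxBr mulmxDr -scalemxAr -!colE.
apply/matrixP=> i j; rewrite !mxE !(gdist_sym conn_e i) //.
by rewrite -natrD (gdist_nbrs_sqr_sum sym_e conn_e nbr_v) // natrD natrM addrAC subrr add0r.
Qed.
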